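(* Let $N\ge 1$ and $R\ge 1$, and for each $n=1,\ldots,N$ let $\mathbf{A}^{(n)}\in\mathbb{R}^{I_n\times R}$ be a random matrix with rows $\mathbf{a}^{(n)}_{i_n}\in\mathbb{R}^R$ (written as column vectors), $i_n=1,\ldots,I_n$, all entries having finite second moments. Assume the matrices $\mathbf{A}^{(1)},\ldots,\mathbf{A}^{(N)}$ are independent and that, for all $n$ and all $i_n$, the row vectors $\{\mathbf{a}^{(n)}_{i_n}\}$ are independent. Then $$\mathbb{E}\left[ \Big(\bigodot_n \mathbf{A}^{(n)}\Big)^T \Big(\bigodot_n \mathbf{A}^{(n)}\Big)\right] =\sum_{i_1=1}^{I_1}\cdots\sum_{i_N=1}^{I_N} \mathbb{E}\left[ \mathbf{a}^{(1)}_{i_1}\mathbf{a}^{(1)T}_{i_1}\right]\circledast \mathbb{E}\left[ \mathbf{a}^{(2)}_{i_2}\mathbf{a}^{(2)T}_{i_2}\right]\circledast\cdots\circledast \mathbb{E}\left[ \mathbf{a}^{(N)}_{i_N}\mathbf{a}^{(N)T}_{i_N}\right],$$ where $\mathbb{E}\left[ \mathbf{a}^{(n)}_{i_n}\mathbf{a}^{(n)T}_{i_n}\right] = \mathbb{E}[\mathbf{a}_{i_n}^{(n)}]\mathbb{E}[\mathbf{a}_{i_n}^{(n)}]^T + \mathrm{Var}\big(\mathbf{a}^{(n)}_{i_n}\big)$, with $\mathrm{Var}$ denoting the covariance matrix.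
   Context: $\circledast$ denotes the Hadamard (entrywise) product of matrices of the same size. For matrices $\mathbf{A}\in\mathbb{R}^{I\times K}$, $\mathbf{B}\in\mathbb{R}^{J\times K}$, the Khatri–Rao product $\mathbf{A}\odot\mathbf{B}\in\mathbb{R}^{IJ\times K}$ is the columnwise Kronecker product, and $\bigodot_n \mathbf{A}^{(n)} = \mathbf{A}^{(N)}\odot\mathbf{A}^{(N-1)}\odot\cdots\odot\mathbf{A}^{(1)}$, a matrix of size $\prod_n I_n\times R$ whose rows are exactly the vectors $\mathbf{a}^{(1)}_{i_1}\circledast\cdots\circledast\mathbf{a}^{(N)}_{i_N}$ (transposed) as $(i_1,\ldots,i_N)$ ranges over all index tuples. *)

From HB Require Import structures.
From mathcomp Require Import all_boot all_order all_algebra.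
From mathcomp Require Import all_classical all_reals all_analysis.
Set Implicit Arguments. Unset Strict Implicit. Unset Printing Implicit Defensive.
Import Order.TTheory GRing.Theory Num.Theory.
Local Open Scope classical_set_scope.
Local Open Scope ring_scope.

Definition hadamard (R : pzRingType) m n (A B : 'M[R]_(m, n)) : 'M[R]_(m, n) :=
  map2_mx (fun x y => x * y) A B.

(* Binary Khatri-Rao product (columnwise Kronecker product):
   row (i, j) of A ⊙ B, at position i * n + j, is the entrywise product of
   row i of A and row j of B. *)
Definition khatri_rao2 (R : pzRingType) m n K (A : 'M[R]_(m, K)) (B : 'M[R]_(n, K))
  : 'M[R]_(m * n, K) :=
  \matrix_(k, r) let ij := enum_val (cast_ord (esym (mxvec_cast m n)) k) in
                 A ij.1 r * B ij.2 r.

(* Iterated Khatri-Rao product of a list [:: M_1; ...; M_p] of matrices with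
   K columns: M_1 ⊙ (M_2 ⊙ (... ⊙ (M_p ⊙ 1))), where the all-ones 1 x K row
   is a neutral element (it does not change the row order). *)
Definition khatri_rao_seq (R : pzRingType) K (s : seq {m : nat & 'M[R]_(m, K)})
  : {m : nat & 'M[R]_(m, K)} :=
  foldr (fun x acc => existT _ _ (khatri_rao2 (projT2 x) (projT2 acc)))
        (existT _ 1%N (const_mx 1)) s.

(* \bigodot_n A^(n) = A^(N) ⊙ A^(N-1) ⊙ ... ⊙ A^(1)  (n indexed by 'I_N). *)
Definition khatri_rao (R : pzRingType) N (I : 'I_N -> nat) K
  (A : forall n : 'I_N, 'M[R]_(I n, K)) : {m : nat & 'M[R]_(m, K)} :=
  khatri_rao_seq [seq existT (fun m => 'M[R]_(m, K)) (I n) (A n) | n <- rev (enum 'I_N)].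

Definition gen_sigma (T : Type) (R : realType) (J : Type) (f : J -> T -> R)
  : set (set T) :=
  <<s [set E | exists j B, measurable B /\ E = f j @^-1` B] >>.

Definition mutually_independent d (T : measurableType d) (R : realType)
  (P : probability T R) (J : finType) (F : J -> set (set T)) : Prop :=
  forall (S : {set J}) (E : J -> set T),
    (forall j, j \in S -> F j (E j)) ->
    P (\big[setI/setT]_(j in S) E j) = (\prod_(j in S) P (E j))%E.

From HB Require Import structures.
From mathcomp Require Import all_boot all_order all_algebra.
From mathcomp Require Import all_classical all_reals all_analysis.
From mathcomp Require Import measurable_realfun measurable_fun_approximation.
Set Implicit Arguments. Unset Strict Implicit. Unset Printing Implicit Defensive.
Import Order.TTheory GRing.Theory Num.Theory.
Import numFieldNormedType.Exports.
Local Open Scope classical_set_scope.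
Local Open Scope ring_scope.

(* Entry (r, s) of the Gram matrix of the Khatri-Rao product is
   \prod_n \sum_(i_n) a^(n)_(i_n r) a^(n)_(i_n s), a product of N random
   variables measurable with respect to the independent sigma-algebras generated
   by A^(1), ..., A^(N).  Its expectation is therefore the product of the
   expectations, and expanding this product of sums over all index tuples gives
   the Hadamard-product formula; the second identity is E[ab] = E[a] E[b] + Cov(a, b).
   The product rule for independent integrable variables is bootstrapped as usual:
   for indicators it is the definition of independence; then, one factor at a
   time, an indicator is replaced by a nonnegative measurable function
   (approximation by simple functions and monotone convergence) and finally by
   an integrable one (positive and negative parts). *)

Lemma bigD1_if (R : Type) (idx : R) (op : Monoid.com_law idx) (I : finType)
    (m : I) (a : R) (F : I -> R) :
  \big[op/idx]_i (if i == m then a else F i) = op a (\big[op/idx]_(i | i != m) F i).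
Proof. by rewrite (bigD1 m)//= eqxx; congr (op _ _); apply: eq_bigr => i /negbTE ->. Qed.

Lemma prod_indic (I : finType) (T : Type) (R : pzRingType) (E : I -> set T) x :
  \prod_i \1_(E i) x = \1_(\big[setI/setT]_i E i) x :> R.
Proof.
apply: (big_rec2 (fun a B => a = \1_B x)); first by rewrite indicT.
by move=> i a B _ ->; rewrite indicI.
Qed.

Section sigma_measurable.
Context d (T : measurableType d) (R : realType).
Implicit Types (H : set (set T)) (Y : T -> R).

Definition sigma_measurable H Y := forall B : set R, measurable B -> H (Y @^-1` B).

Lemma sigma_measurable_fun H Y : (forall B, H B -> measurable B) ->
  sigma_measurable H Y -> measurable_fun setT Y.
Proof. by move=> Hm hY _ B mB; rewrite setTI; exact/Hm/hY. Qed.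

Lemma sigma_measurable_funrpos H Y : sigma_measurable H Y -> sigma_measurable H Y^\+.
Proof.
move=> hY B mB; apply: (hY [set r : R | B (Num.max r 0)]).
by have := measurable_funrpos (@measurable_id _ _ setT) measurableT mB; rewrite setTI.
Qed.

Lemma sigma_measurable_funrneg H Y : sigma_measurable H Y -> sigma_measurable H Y^\-.
Proof.
move=> hY B mB; apply: (hY [set r : R | B (Num.max (- r) 0)]).
by have := measurable_funrneg (@measurable_id _ _ setT) measurableT mB; rewrite setTI.
Qed.

Section gen_sigma.
Variables (J : Type) (f : J -> T -> R).
Let preimages := [set E | exists j B, measurable B /\ E = f j @^-1` B].

Lemma gen_sigma_setT : gen_sigma f setT.
Proof.
by have [h0 hD _] := smallest_sigma_algebra setT preimages; have := hD _ h0; rewrite setD0.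
Qed.

Lemma gen_sigma_measurable : (forall j, measurable_fun setT (f j)) ->
  forall B, gen_sigma f B -> measurable B.
Proof.
move=> mf B; apply: smallest_sub => [|_ [j [A [mA ->]]]]; first exact: sigma_algebra_measurable.
by have := mf j measurableT A mA; rewrite setTI.
Qed.

Lemma gen_sigma_generator_measurable j :
  measurable_fun (T := g_sigma_algebraType preimages) setT (f j).
Proof. by move=> _ B mB; rewrite setTI; apply: sub_sigma_algebra; exists j, B. Qed.

Lemma sigma_measurable_gen_sigma (g : T -> R) :
  measurable_fun (T := g_sigma_algebraType preimages) setT g ->
  sigma_measurable (gen_sigma f) g.
Proof. by move=> mg B mB; have := mg measurableT B mB; rewrite setTI. Qed.

End gen_sigma.
End sigma_measurable.

Section ge0_integralM_indep.
Context d (T : measurableType d) (R : realType) (P : probability T R).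
Local Open Scope ereal_scope.
Variables (H : set (set T)) (Hm : forall B, H B -> measurable B).
Variables (X : T -> R) (X0 : forall x, (0 <= X x)%R) (mX : measurable_fun setT X).
Hypothesis XH : forall B, H B ->
  \int[P]_x (X x * \1_B x)%:E = \int[P]_x (X x)%:E * P B.
Hypothesis Xfin : \int[P]_x (X x)%:E \is a fin_num.

Let factorizes (g : T -> R) :=
  \int[P]_x (X x * g x)%:E = \int[P]_x (X x)%:E * \int[P]_x (g x)%:E.

Let factorizes_indic B : H B -> factorizes \1_B.
Proof. by move=> HB; rewrite /factorizes XH// integral_indic ?setIT//; exact: Hm. Qed.

Let factorizesD (f g : T -> R) : (forall x, (0 <= f x)%R) -> (forall x, (0 <= g x)%R) ->
  measurable_fun setT f -> measurable_fun setT g ->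
  factorizes f -> factorizes g -> factorizes (f \+ g)%R.
Proof.
move=> f0 g0 mf mg ff fg; rewrite /factorizes.
under eq_integral do rewrite /= mulrDr EFinD.
rewrite ge0_integralD//; last 4 first.
- by move=> x _; rewrite lee_fin mulr_ge0.
- by apply/measurable_EFinP; exact: measurable_funM.
- by move=> x _; rewrite lee_fin mulr_ge0.
- by apply/measurable_EFinP; exact: measurable_funM.
under [X in _ = _ * X]eq_integral do rewrite /= EFinD.
rewrite [X in _ = _ * X]ge0_integralD//; last 4 first.
- by move=> x _; rewrite lee_fin.
- exact/measurable_EFinP.
- by move=> x _; rewrite lee_fin.
- exact/measurable_EFinP.
by rewrite ff fg -ge0_muleDr//; apply: integral_ge0 => x _; rewrite lee_fin.
Qed.

Let factorizesZ (c : R) (f : T -> R) : (0 <= c)%R -> (forall x, (0 <= f x)%R) ->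
  measurable_fun setT f -> factorizes f -> factorizes (fun x => c * f x)%R.
Proof.
move=> c0 f0 mf ff; rewrite /factorizes.
under eq_integral do rewrite mulrCA EFinM.
rewrite ge0_integralZl_EFin//; last 2 first.
- by move=> x _; rewrite lee_fin mulr_ge0.
- by apply/measurable_EFinP; exact: measurable_funM.
under [X in _ = _ * X]eq_integral do rewrite EFinM.
rewrite [X in _ = _ * X]ge0_integralZl_EFin//; last 2 first.
- by move=> x _; rewrite lee_fin.
- exact/measurable_EFinP.
by rewrite ff muleCA.
Qed.

Let factorizes_sum (I : Type) (s : seq I) (f : I -> T -> R) :
  (forall i x, (0 <= f i x)%R) -> (forall i, measurable_fun setT (f i)) ->
  (forall i, factorizes (f i)) -> factorizes (fun x => \sum_(i <- s) f i x)%R.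
Proof.
move=> f0 mf ff; elim: s => [|a s IH].
  rewrite /factorizes; under eq_integral do rewrite big_nil mulr0.
  by under [X in _ = _ * X]eq_integral do rewrite big_nil; rewrite integral0 mule0.
under eq_fun do rewrite big_cons.
apply: factorizesD => //; first by move=> x; rewrite sumr_ge0.
exact: measurable_sum.
Qed.

Variables (Y : T -> R) (Y0 : forall x, (0 <= Y x)%R) (hY : sigma_measurable H Y).

Let approxY := approx setT (EFin \o Y).

Let dyadic_approx_in n k : H (dyadic_approx setT (EFin \o Y) n k).
Proof.
rewrite /dyadic_approx; case: ifPn => _; last first.
  by have := hY measurable0; rewrite preimage_set0.
have -> : setT `&` [set x | (EFin \o Y) x \in [set x%:E | x in [set` dyadic_itv R n k]]]
    = Y @^-1` [set` dyadic_itv R n k].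
  apply/seteqP; split => x /=; first by move=> [_ /set_mem [r rI [<-]]].
  by move=> h; split => //; apply/mem_set; exists (Y x).
by apply: hY; exact: measurable_itv.
Qed.

Let integer_approx_in n : H (integer_approx setT (EFin \o Y) n).
Proof.
have -> : integer_approx setT (EFin \o Y) n = Y @^-1` `[n%:R, +oo[%classic.
  apply/seteqP; split => x /=; rewrite /integer_approx /= in_itv /= andbT lee_fin.
    by move=> [].
  by [].
by apply: hY; exact: measurable_itv.
Qed.

Let factorizes_approx n : factorizes (approxY n).
Proof.
have mA k : measurable (dyadic_approx setT (EFin \o Y) n k) by exact/Hm.
have mB : measurable (integer_approx setT (EFin \o Y) n) by exact/Hm.
apply: factorizesD.
- by move=> x; rewrite sumr_ge0// => k _; rewrite mulr_ge0.
- by move=> x; rewrite mulr_ge0.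
- by apply: measurable_sum => k; apply: measurable_funM => //; exact: measurable_indic.
- by apply: measurable_funM => //; exact: measurable_indic.
- apply: factorizes_sum => [k x|k|k]; first by rewrite mulr_ge0.
    by apply: measurable_funM => //; exact: measurable_indic.
  by apply: factorizesZ => //; exact/factorizes_indic.
- by apply: factorizesZ => //; exact/factorizes_indic.
Qed.

Let approxY_ge0 n x : (0 <= approxY n x)%R.
Proof. by rewrite addr_ge0 ?mulr_ge0// sumr_ge0. Qed.

Let measurable_approxY n : measurable_fun setT (approxY n).
Proof.
apply: measurable_funD; last by apply: measurable_funM => //; exact/measurable_indic/Hm.
by apply: measurable_sum => k; apply: measurable_funM => //; exact/measurable_indic/Hm.
Qed.

Let cvg_integral_approxY (c : T -> R) : (forall x, (0 <= c x)%R) ->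
  measurable_fun setT c ->
  \int[P]_x (c x * approxY n x)%:E @[n --> \oo] --> \int[P]_x (c x * Y x)%:E.
Proof.
move=> c0 mc.
have := @cvg_monotone_convergence _ _ _ P setT measurableT (fun n x => (c x * approxY n x)%:E).
have -> : (fun x => limn (fun n => (c x * approxY n x)%:E)) = (fun x => (c x * Y x)%:E).
  apply/funext => x; apply/cvg_lim => //; apply: cvg_EFin; first exact: nearW.
  apply: cvgMl_tmp; exact: (cvg_approx (fun x _ => Y0 x : (0 <= (EFin \o Y) x)%E) I (ltry _)).
apply=> [n|n x _|x _ m n mn].
- by apply/measurable_EFinP; exact: measurable_funM.
- by rewrite lee_fin mulr_ge0.
- by rewrite lee_fin ler_wpM2l//; exact/lefP/nd_approx.
Qed.

Lemma ge0_integralM_indep :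
  \int[P]_x (X x * Y x)%:E = \int[P]_x (X x)%:E * \int[P]_x (Y x)%:E.
Proof.
have h1 : \int[P]_x (X x * approxY n x)%:E @[n --> \oo] --> \int[P]_x (X x * Y x)%:E.
  exact: cvg_integral_approxY.
have h2 : \int[P]_x (approxY n x)%:E @[n --> \oo] --> \int[P]_x (Y x)%:E.
  have := @cvg_integral_approxY (cst 1%R) (fun=> ler01) (measurable_cst _).
  by under eq_cvg do under eq_integral do rewrite mul1r; under eq_integral do rewrite mul1r.
have h3 : \int[P]_x (X x * approxY n x)%:E @[n --> \oo] -->
    \int[P]_x (X x)%:E * \int[P]_x (Y x)%:E.
  by rewrite (eq_cvg _ _ factorizes_approx); exact: cvgeZl.
exact: cvg_unique h1 h3.
Qed.

End ge0_integralM_indep.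

Section integral_prod_indep.
Context d (T : measurableType d) (R : realType) (P : probability T R).
Local Open Scope ereal_scope.
Variables (N : nat) (F : 'I_N -> set (set T)).
Hypotheses (Fm : forall n B, F n B -> measurable B) (FT : forall n, F n setT).
Hypothesis Find : mutually_independent P F.

Lemma integral_prod_indic (E : 'I_N -> set T) : (forall n, F n (E n)) ->
  \int[P]_x (\prod_n \1_(E n) x)%:E = \prod_n P (E n).
Proof.
move=> FE; under eq_integral do rewrite prod_indic.
rewrite integral_indic ?setIT//; last by apply: bigsetI_measurable => n _; exact: Fm.
transitivity (P (\big[setI/setT]_(n in setTfor 'I_N) E n)).
  by apply: f_equal; apply: eq_bigl => n; rewrite finset.in_setT.
by rewrite (Find (fun n _ => FE n)); apply: eq_bigl => n; rewrite finset.in_setT.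
Qed.

Lemma ge0_integral_prod_indep_indic (G : {set 'I_N}) (Y : 'I_N -> T -> R)
    (E : 'I_N -> set T) :
  (forall n x, (0 <= Y n x)%R) -> (forall n, sigma_measurable (F n) (Y n)) ->
  (forall n, \int[P]_x (Y n x)%:E \is a fin_num) -> (forall n, F n (E n)) ->
  \int[P]_x (\prod_n (if n \in G then Y n x else \1_(E n) x))%:E
  = \prod_n (if n \in G then \int[P]_x (Y n x)%:E else P (E n)).
Proof.
move=> Y0 hY Yfin; have [k] := ubnP #|G|; elim: k G E => // k IH G E.
rewrite ltnS => cardG FE; have [->|[m mG]] := set_0Vmem G.
  under eq_integral do under eq_bigr do rewrite finset.in_set0.
  by under [RHS]eq_bigr do rewrite finset.in_set0; exact: integral_prod_indic.
have cardGm : (#|G :\ m| < k)%N by rewrite (cardsD1 m G) mG in cardG.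
pose Z x := (\prod_(n | n != m) (if n \in G then Y n x else \1_(E n) x))%R.
pose restZ := \prod_(n | n != m) (if n \in G then \int[P]_x (Y n x)%:E else P (E n)).
(* By induction, [Z] integrates against every indicator of [F m] as if it were
   independent of [F m], which is all [ge0_integralM_indep] needs. *)
have ZB B : F m B -> \int[P]_x (Z x * \1_B x)%:E = restZ * P B.
  move=> FB; have FBE n : F n (if n == m then B else E n) by case: eqP => [->|].
  have prodE x : (\prod_n (if n \in G :\ m then Y n x
      else \1_(if n == m then B else E n) x) = Z x * \1_B x)%R.
    rewrite (bigD1 m)//= !inE eqxx /= mulrC; congr (_ * _)%R.
    by apply: eq_bigr => n nm; rewrite !inE nm /= (negbTE nm).
  have intE : \prod_n (if n \in G :\ m then \int[P]_x (Y n x)%:E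
      else P (if n == m then B else E n)) = restZ * P B.
    rewrite (bigD1 m)//= !inE eqxx /= muleC; congr (_ * _).
    by apply: eq_bigr => n nm; rewrite !inE nm /= (negbTE nm).
  rewrite -intE -(IH (G :\ m) _ cardGm FBE).
  by apply: eq_integral => x _; rewrite prodE.
have intZ : \int[P]_x (Z x)%:E = restZ.
  rewrite -[RHS]mule1 -(probability_setT P) -ZB//.
  by apply: eq_integral => x _; rewrite indicT mulr1.
have Z0 x : (0 <= Z x)%R by apply: prodr_ge0 => n _; case: ifP.
have mZ : measurable_fun setT Z.
  rewrite /Z; under eq_fun do rewrite big_mkcond /=.
  apply: (@measurable_prod _ _ _ _ _ _ (fun n x =>
    if n != m then if n \in G then Y n x else \1_(E n) x else 1%R)) => n _.
  case: (n != m); last exact: measurable_cst.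
  case: (n \in G); first exact: sigma_measurable_fun (@Fm n) (hY n).
  exact/measurable_indic/Fm.
have Zfin : \int[P]_x (Z x)%:E \is a fin_num.
  by rewrite intZ prode_fin_num// => n _; case: ifP; rewrite ?fin_num_measure//; exact: Fm.
have ZH B : F m B -> \int[P]_x (Z x * \1_B x)%:E = \int[P]_x (Z x)%:E * P B.
  by move=> FB; rewrite intZ ZB.
have := ge0_integralM_indep (@Fm m) Z0 mZ ZH Zfin (Y0 m) (hY m).
rewrite intZ (bigD1 m)//= mG muleC => <-.
by apply: eq_integral => x _; rewrite (bigD1 m)//= mG mulrC.
Qed.

Lemma ge0_integral_prod_indep (Y : 'I_N -> T -> R) :
  (forall n x, (0 <= Y n x)%R) -> (forall n, sigma_measurable (F n) (Y n)) ->
  (forall n, \int[P]_x (Y n x)%:E \is a fin_num) ->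
  \int[P]_x (\prod_n Y n x)%:E = \prod_n \int[P]_x (Y n x)%:E.
Proof.
move=> Y0 hY Yfin; have := ge0_integral_prod_indep_indic (setTfor 'I_N) Y0 hY Yfin FT.
under eq_integral do under eq_bigr do rewrite finset.in_setT.
by under eq_bigr do rewrite finset.in_setT.
Qed.

Let Lfun1_integral_fin_num (f : T -> R) : f \in Lfun P 1 -> \int[P]_x (f x)%:E \is a fin_num.
Proof. by move=> /Lfun1_integrable; exact: integrable_fin_num. Qed.

Let integralB_Lfun (f g : T -> R) : f \in Lfun P 1 -> g \in Lfun P 1 ->
  \int[P]_x (f x - g x)%:E = \int[P]_x (f x)%:E - \int[P]_x (g x)%:E.
Proof.
move=> /Lfun1_integrable Lf /Lfun1_integrable Lg.
by under eq_integral do rewrite EFinB; exact: integralB_EFin.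
Qed.

Lemma ge0_integral_prod_indep_Lfun (X : 'I_N -> T -> R) :
  (forall n, X n \in Lfun P 1) -> (forall n, sigma_measurable (F n) (X n)) ->
  (forall n x, (0 <= X n x)%R) ->
  (fun x => \prod_n X n x)%R \in Lfun P 1 /\
  \int[P]_x (\prod_n X n x)%:E = (\prod_n fine (\int[P]_x (X n x)%:E))%:E.
Proof.
move=> LX hX X0.
have intX : \int[P]_x (\prod_n X n x)%:E = (\prod_n fine (\int[P]_x (X n x)%:E))%:E.
  rewrite ge0_integral_prod_indep// => [|n]; last exact: Lfun1_integral_fin_num.
  by rewrite -prodEFin; apply: eq_bigr => n _; exact/esym/fineK/Lfun1_integral_fin_num.
split=> //; apply/Lfun1_integrable/integrableP; split.
  apply/measurable_EFinP/measurable_prod => n _.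
  exact: sigma_measurable_fun (@Fm n) (hX n).
under eq_integral do rewrite /= ger0_norm ?prodr_ge0//.
by rewrite intX ltry.
Qed.

Lemma integral_prod_indep_signed (G : {set 'I_N}) (X : 'I_N -> T -> R) :
  (forall n, X n \in Lfun P 1) -> (forall n, sigma_measurable (F n) (X n)) ->
  (forall n x, n \notin G -> (0 <= X n x)%R) ->
  (fun x => \prod_n X n x)%R \in Lfun P 1 /\
  \int[P]_x (\prod_n X n x)%:E = (\prod_n fine (\int[P]_x (X n x)%:E))%:E.
Proof.
move=> LX hX; have [k] := ubnP #|G|; elim: k G X LX hX => // k IH G X LX hX.
rewrite ltnS => cardG X0; have [G0|[m mG]] := set_0Vmem G.
  by apply: ge0_integral_prod_indep_Lfun => // n x; apply: X0; rewrite G0 finset.in_set0.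
rewrite (cardsD1 m G) mG add1n in cardG.
pose Xalt f n x := if n == m then f x else X n x.
have altE f x : (\prod_n Xalt f n x = f x * \prod_(n | n != m) X n x)%R.
  exact: bigD1_if.
have fine_altE f : (\prod_n fine (\int[P]_x (Xalt f n x)%:E) =
    fine (\int[P]_x (f x)%:E) * \prod_(n | n != m) fine (\int[P]_x (X n x)%:E))%R.
  by rewrite -bigD1_if; apply: eq_bigr => n _; rewrite /Xalt; case: (n == m).
have IHalt f : f \in Lfun P 1 -> sigma_measurable (F m) f -> (forall x, 0 <= f x)%R ->
    (fun x => \prod_n Xalt f n x)%R \in Lfun P 1 /\
    \int[P]_x (\prod_n Xalt f n x)%:E =
      (\prod_n fine (\int[P]_x (Xalt f n x)%:E))%:E.
  move=> Lf hf f0; apply: (IH (G :\ m)) => // [n|n|n x].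
  - by rewrite /Xalt; case: (n == m); [exact: Lf|exact: LX].
  - by rewrite /Xalt; case: eqP => [->|_]; [exact: hf|exact: hX].
  - by rewrite /Xalt !inE; case: eqP => //= _ /X0; apply.
have Lp : (X m)^\+%R \in Lfun P 1.
  by apply/Lfun1_integrable/integrable_funrpos => //; exact/Lfun1_integrable/LX.
have Ln : (X m)^\-%R \in Lfun P 1.
  by apply/Lfun1_integrable/integrable_funrneg => //; exact/Lfun1_integrable/LX.
have [LP EP] := IHalt _ Lp (sigma_measurable_funrpos (hX m)) (funrpos_ge0 _).
have [LN EN] := IHalt _ Ln (sigma_measurable_funrneg (hX m)) (funrneg_ge0 _).
have XE x : (\prod_n X n x =
    \prod_n Xalt (X m)^\+%R n x - \prod_n Xalt (X m)^\-%R n x)%R.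
  rewrite !altE -mulrBl (bigD1 m)//=; congr (_ * _)%R.
  by rewrite -{1}(funrposBneg (X m)).
split; first by rewrite (funext XE); exact: rpredB.
transitivity (\int[P]_x (\prod_n Xalt (X m)^\+%R n x)%:E
    - \int[P]_x (\prod_n Xalt (X m)^\-%R n x)%:E).
  by rewrite -(integralB_Lfun LP LN); apply: eq_integral => x _; rewrite XE.
rewrite EP EN -EFinB; congr EFin.
rewrite !fine_altE -mulrBl [RHS](bigD1 m)//=; congr (_ * _)%R.
rewrite -fineB ?Lfun1_integral_fin_num//; congr fine.
rewrite -integralB_Lfun//; apply: eq_integral => x _.
by rewrite -[in RHS](funrposBneg (X m)).
Qed.

Lemma expectation_prod_indep (X : 'I_N -> T -> R) :
  (forall n, X n \in Lfun P 1) -> (forall n, sigma_measurable (F n) (X n)) ->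
  'E_P[fun x => \prod_n X n x]%R = (\prod_n fine 'E_P[X n])%:E.
Proof.
move=> LX hX; have X0 n x : n \notin setTfor 'I_N -> (0 <= X n x)%R.
  by rewrite finset.in_setT.
by rewrite unlock; have [_ ->] := @integral_prod_indep_signed (setTfor 'I_N) X LX hX X0.
Qed.

End integral_prod_indep.

Section expectation.
Context d (T : measurableType d) (R : realType) (P : probability T R).

Lemma Lfun1_sum (I : finType) (f : I -> T -> R) :
  (forall i, f i \in Lfun P 1) -> (fun w => \sum_i f i w) \in Lfun P 1.
Proof.
move=> Lf; rewrite (_ : (fun w => _) = \sum_i f i); first exact: rpred_sum.
by apply/funext => w; rewrite fct_sumE.
Qed.

Lemma fine_expectation_sum (I : finType) (f : I -> T -> R) :
  (forall i, f i \in Lfun P 1) ->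
  fine ('E_P[fun w => (\sum_i f i w)%R])%E = \sum_i fine ('E_P[f i])%E.
Proof.
move=> Lf; rewrite sum_fine => [|i _]; last exact: expectation_fin_num.
rewrite unlock; under eq_integral do rewrite -sumEFin.
by rewrite integral_sum// => i; exact/Lfun1_integrable.
Qed.

Lemma fine_expectationM_covariance (a b : T -> R) :
  a \in Lfun P 2%:E -> b \in Lfun P 2%:E ->
  fine ('E_P[fun w => (a w * b w)%R])%E =
  fine ('E_P[a])%E * fine ('E_P[b])%E + fine (covariance P a b).
Proof.
move=> La Lb; have Lab := Lfun2_mul_Lfun1 La Lb.
have La1 : a \in Lfun P 1 by apply: Lfun_subset12 => //; exact: fin_num_measure.
have Lb1 : b \in Lfun P 1 by apply: Lfun_subset12 => //; exact: fin_num_measure.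
rewrite covarianceE// fineB ?fin_numM ?expectation_fin_num// fineM ?expectation_fin_num//.
by rewrite addrC subrK.
Qed.

End expectation.

Lemma bigA_distr_dffun (R : comPzSemiRingType) (I : finType) (J_ : I -> finType)
    (f : forall i, J_ i -> R) :
  \sum_(t : {dffun forall i, J_ i}) \prod_i f i (t i) = \prod_i \sum_(j : J_ i) f i j.
Proof.
pose P_ i := [ffun j => f i j].
rewrite (reindex (@dffun_of_fprod I J_)); last exact/onW_bij/dffun_of_fprod_bij.
transitivity (\sum_(t : fprod J_) \prod_(i in I) P_ i (t i)).
  by apply: eq_bigr => t _; apply: eq_bigr => i _; rewrite !ffunE.
rewrite big_fprod -(bigA_distr_big_dep (fun i => tagged_with J_ i) (fun i j => untag 0 (P_ i) j)).
apply: eq_bigr => i _; rewrite (eq_bigr (fun j => P_ i j)) => [|j _]; last by rewrite ffunE.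
by rewrite (big_tag (fun i j => P_ i j) i).
Qed.

Lemma big_hadamardE (R : pzRingType) N K (M : 'I_N -> 'M[R]_K) r s :
  (\big[@hadamard R K K/const_mx 1]_(n < N) M n) r s = \prod_(n < N) M n r s.
Proof.
apply: (big_rec2 (fun (A : 'M[R]_K) (a : R) => A r s = a)); first by rewrite mxE.
by move=> i A a _ <-; rewrite mxE.
Qed.

Section khatri_rao_gram.
Variable R : comPzRingType.

Lemma khatri_rao2_gram m n K (A : 'M[R]_(m, K)) (B : 'M[R]_(n, K)) r s :
  \sum_(k < m * n) khatri_rao2 A B k r * khatri_rao2 A B k s =
  (\sum_(i < m) A i r * A i s) * (\sum_(j < n) B j r * B j s).
Proof.
under eq_bigr do rewrite !mxE.
pose h (p : 'I_m * 'I_n) : 'I_(m * n) := cast_ord (mxvec_cast m n) (enum_rank p).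
rewrite (reindex h); last first.
  exists (fun k => enum_val (cast_ord (esym (mxvec_cast m n)) k)) => [p _|k _].
    by rewrite /h cast_ordK enum_rankK.
  by rewrite /h enum_valK cast_ordKV.
under eq_bigr do rewrite /h cast_ordK enum_rankK.
rewrite -(pair_big xpredT xpredT (fun i j => A i r * B j r * (A i s * B j s))) /=.
rewrite big_distrl; apply: eq_bigr => i _; rewrite big_distrr; apply: eq_bigr => j _.
by rewrite mulrACA.
Qed.

Lemma khatri_rao_seq_gram K (l : seq {m : nat & 'M[R]_(m, K)}) r s :
  let KR := projT2 (khatri_rao_seq l) in
  \sum_(k < projT1 (khatri_rao_seq l)) KR k r * KR k s
  = \prod_(x <- l) \sum_(i < projT1 x) projT2 x i r * projT2 x i s.
Proof.
elim: l => [|x l IH] /=; first by rewrite big_nil big_ord1 !mxE mulr1.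
by rewrite big_cons -IH khatri_rao2_gram.
Qed.

Lemma khatri_rao_gram N (I : 'I_N -> nat) K (A : forall n : 'I_N, 'M[R]_(I n, K)) r s :
  (let KR := projT2 (khatri_rao A) in KR^T *m KR) r s =
  \prod_n \sum_(i < I n) A n i r * A n i s.
Proof.
rewrite /= mxE (eq_bigr (fun k => projT2 (khatri_rao A) k r * projT2 (khatri_rao A) k s)).
  by rewrite /khatri_rao khatri_rao_seq_gram big_map big_rev big_enum.
by move=> k _; rewrite mxE.
Qed.

End khatri_rao_gram.

Theorem theorem1 (d : measure_display) (T : measurableType d) (R : realType)
  (P : probability T R) (N K : nat) (I : 'I_N -> nat)
  (A : forall n : 'I_N, T -> 'M[R]_(I n, K)) :
  (0 < N)%N -> (0 < K)%N ->
  (* all entries have finite second moments *)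
  (forall n i r, (fun w => A n w i r) \in Lfun P 2%:E) ->
  (* the matrices A^(1), ..., A^(N) are independent *)
  mutually_independent P
    (fun n : 'I_N => gen_sigma (fun ir : 'I_(I n) * 'I_K => fun w => A n w ir.1 ir.2)) ->
  (* for each n, the rows a^(n)_(i_n) are independent *)
  (forall n : 'I_N, mutually_independent P
     (fun i : 'I_(I n) => gen_sigma (fun r : 'I_K => fun w => A n w i r))) ->
  let Eaa n i : 'M[R]_K :=
    \matrix_(r, s) fine ('E_P[fun w => (A n w i r * A n w i s)%R])%E in
  (forall r s : 'I_K,
     ('E_P[fun w => (let KR := projT2 (khatri_rao (A ^~ w)) in KR^T *m KR) r s])%E
     = ((\sum_(t : {dffun forall n : 'I_N, 'I_(I n)})
           \big[@hadamard R K K/const_mx 1]_(n < N) Eaa n (t n)) r s)%:E)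
  /\
  (forall n i,
     Eaa n i = (\col_r fine ('E_P[fun w => A n w i r])%E) *m
               (\col_r fine ('E_P[fun w => A n w i r])%E)^T
             + \matrix_(r, s) fine (covariance P (fun w => A n w i r) (fun w => A n w i s))).
Proof.
move=> _ _ L2 indep _ Eaa; split=> [r s|n i]; last first.
  by apply/matrixP => r s; rewrite !mxE big_ord1 !mxE fine_expectationM_covariance.
have L1 n i t : (fun w => A n w i t) \in Lfun P 1.
  by apply: Lfun_subset12 => //; exact: fin_num_measure.
have mA n (it : 'I_(I n) * 'I_K) : measurable_fun setT (fun w => A n w it.1 it.2).
  by have /Lfun1_integrable/integrableP[/measurable_EFinP] := L1 n it.1 it.2.
pose X n w := \sum_(i < I n) A n w i r * A n w i s.
have LX n : X n \in Lfun P 1 by apply: Lfun1_sum => i; exact: Lfun2_mul_Lfun1.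
have hX n : sigma_measurable
    (gen_sigma (fun it : 'I_(I n) * 'I_K => fun w => A n w it.1 it.2)) (X n).
  apply: sigma_measurable_gen_sigma; apply: measurable_sum => i.
  by apply: measurable_funM; exact: (gen_sigma_generator_measurable
    (f := fun it : 'I_(I n) * 'I_K => fun w => A n w it.1 it.2) (i, _)).
under eq_fun do rewrite khatri_rao_gram.
rewrite (expectation_prod_indep (fun n => gen_sigma_measurable (mA n))
  (fun _ => @gen_sigma_setT _ _ _ _ _) indep LX hX).
rewrite summxE; congr EFin; under [RHS]eq_bigr do rewrite big_hadamardE.
rewrite (bigA_distr_dffun (fun n i => Eaa n i r s)); apply: eq_bigr => n _.
rewrite /X fine_expectation_sum => [|i]; last exact: Lfun2_mul_Lfun1.
by apply: eq_bigr => i _; rewrite mxE.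
Qed.
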